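(* Let $\mathcal{C}$ be a finitely complete category. Then $\mathcal{C}$ is a regular category if and only if the following three conditions hold: (1) every arrow in $\mathcal{C}$ factors as a regular epimorphism followed by a monomorphism; (2) for every regular epimorphism $f\colon A\to B$ and every object $E$, the induced arrow $1_E\times f\colon E\times A\to E\times B$ is a regular epimorphism; (3) regular epimorphisms are stable under pullbacks along split monomorphisms.
   Context: A morphism is a regular epimorphism if it is the coequalizer of some pair of morphisms. A finitely complete category is regular if every arrow factors as a regular epimorphism followed by a monomorphism and these factorizations are stable under pullback. *)

Set Implicit Arguments.

Record Category := {
  Ob :> Type;
  Hom : Ob -> Ob -> Type;
  idm : forall a : Ob, Hom a a;
  comp : forall x y z : Ob, Hom y z -> Hom x y -> Hom x z;
  comp_id_l : forall a b (f : Hom a b), comp (idm b) f = f;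
  comp_id_r : forall a b (f : Hom a b), comp f (idm a) = f;
  comp_assoc : forall a b c d (f : Hom a b) (g : Hom b c) (h : Hom c d),
      comp h (comp g f) = comp (comp h g) f
}.

Arguments Hom {_} _ _.
Arguments idm {_} a.
Arguments comp {_ x y z} _ _.

Notation "g ∘ f" := (comp g f) (at level 40, left associativity).

Section Notions.
Context {C : Category}.

Definition is_mono {A B : C} (f : Hom A B) : Prop :=
  forall (X : C) (g h : Hom X A), f ∘ g = f ∘ h -> g = h.

Definition is_split_mono {A B : C} (s : Hom A B) : Prop :=
  exists r : Hom B A, r ∘ s = idm A.

Definition is_coequalizer {X A Q : C} (g h : Hom X A) (q : Hom A Q) : Prop :=
  q ∘ g = q ∘ h /\
  forall (Z : C) (k : Hom A Z), k ∘ g = k ∘ h ->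
    exists! u : Hom Q Z, u ∘ q = k.

Definition is_regular_epi {A B : C} (f : Hom A B) : Prop :=
  exists (X : C) (g h : Hom X A), is_coequalizer g h f.

Definition is_terminal (T : C) : Prop :=
  forall X : C, exists! t : Hom X T, True.

Definition is_product {P A B : C} (p1 : Hom P A) (p2 : Hom P B) : Prop :=
  forall (Z : C) (x : Hom Z A) (y : Hom Z B),
    exists! u : Hom Z P, p1 ∘ u = x /\ p2 ∘ u = y.

Definition is_pullback {A B D P : C} (f : Hom A D) (g : Hom B D)
    (p : Hom P A) (q : Hom P B) : Prop :=
  f ∘ p = g ∘ q /\
  forall (Z : C) (x : Hom Z A) (y : Hom Z B), f ∘ x = g ∘ y ->
    exists! u : Hom Z P, p ∘ u = x /\ q ∘ u = y.

End Notions.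

(** Finitely complete: a terminal object and all pullbacks
    (equivalently, all finite limits). *)
Definition finitely_complete (C : Category) : Prop :=
  (exists T : C, is_terminal T) /\
  (forall (A B D : C) (f : Hom A D) (g : Hom B D),
      exists (P : C) (p : Hom P A) (q : Hom P B), is_pullback f g p q).

Definition regepi_mono_factorizations (C : Category) : Prop :=
  forall (A B : C) (f : Hom A B),
    exists (I : C) (e : Hom A I) (m : Hom I B),
      is_regular_epi e /\ is_mono m /\ m ∘ e = f.

(** (Regular epi, mono)-factorizations are stable under pullback:
    given f = m ∘ e (e regular epi, m mono) and g : B' -> B, pulling back
    m along g (giving m' : P -> B') and then e along the induced P -> I
    (giving e' : Q -> P), the pulled-back factorization m' ∘ e' of the
    pullback of f along g is again (regular epi, mono). *)
Definition factorizations_pullback_stable (C : Category) : Prop :=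
  forall (A B I : C) (e : Hom A I) (m : Hom I B),
    is_regular_epi e -> is_mono m ->
    forall (B' P : C) (g : Hom B' B) (m' : Hom P B') (g1 : Hom P I),
      is_pullback m g g1 m' ->
      forall (Q : C) (e' : Hom Q P) (g2 : Hom Q A),
        is_pullback e g1 g2 e' ->
        is_regular_epi e' /\ is_mono m'.

Definition regular (C : Category) : Prop :=
  finitely_complete C /\
  regepi_mono_factorizations C /\
  factorizations_pullback_stable C.

Definition regepi_stable_under_product_with_objects (C : Category) : Prop :=
  forall (A B : C) (f : Hom A B), is_regular_epi f ->
    forall (E EA EB : C) (p1 : Hom EA E) (p2 : Hom EA A)
           (q1 : Hom EB E) (q2 : Hom EB B),
      is_product p1 p2 -> is_product q1 q2 ->
      forall h : Hom EA EB, q1 ∘ h = p1 -> q2 ∘ h = f ∘ p2 ->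
        is_regular_epi h.

Definition regepi_stable_under_split_mono_pullback (C : Category) : Prop :=
  forall (A B : C) (f : Hom A B), is_regular_epi f ->
    forall (B' : C) (s : Hom B' B), is_split_mono s ->
      forall (P : C) (s' : Hom P A) (f' : Hom P B'),
        is_pullback f s s' f' -> is_regular_epi f'.


(* Monomorphisms are stable under pullback in any category, so a finitely
   complete category is regular exactly when it has (regular epi, mono)
   factorizations and regular epimorphisms are stable under all pullbacks.
   Such stability gives (2) and (3), since 1_E × f is the pullback of f along
   the projection E × B -> B.  Conversely, the pullback of f : A -> B along
   any g : B' -> B is the pullback of 1_B' × f along the graph
   <1, g> : B' -> B' × B, which is split by the first projection; so (2)
   followed by (3) shows that it is a regular epimorphism. *)

Definition regular_epi_pullback_stable (C : Category) : Prop :=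
  forall (A B : C) (f : Hom A B), is_regular_epi f ->
    forall (B' P : C) (g : Hom B' B) (g' : Hom P A) (f' : Hom P B'),
      is_pullback f g g' f' -> is_regular_epi f'.

Section Limits.
Context {C : Category}.

Lemma product_ext {P A B Z : C} {p1 : Hom P A} {p2 : Hom P B} {a b : Hom Z P} :
  is_product p1 p2 -> p1 ∘ a = p1 ∘ b -> p2 ∘ a = p2 ∘ b -> a = b.
Proof.
  intros Hprod E1 E2.
  destruct (Hprod _ (p1 ∘ a) (p2 ∘ a)) as [u [_ Hu]].
  rewrite <- (Hu a), (Hu b); auto.
Qed.

Lemma product_pairing {P A B Z : C} (p1 : Hom P A) (p2 : Hom P B)
    (x : Hom Z A) (y : Hom Z B) :
  is_product p1 p2 -> exists u : Hom Z P, p1 ∘ u = x /\ p2 ∘ u = y.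
Proof. intros Hprod. destruct (Hprod _ x y) as [u [Hu _]]. eauto. Qed.

Lemma pullback_ext {A B D P Z : C} {f : Hom A D} {g : Hom B D}
    {p : Hom P A} {q : Hom P B} {a b : Hom Z P} :
  is_pullback f g p q -> p ∘ a = p ∘ b -> q ∘ a = q ∘ b -> a = b.
Proof.
  intros [Hsq Hpb] E1 E2.
  destruct (Hpb _ (p ∘ a) (q ∘ a)) as [u [_ Hu]].
  - rewrite !comp_assoc, Hsq; reflexivity.
  - rewrite <- (Hu a), (Hu b); auto.
Qed.

(* A product is a pullback over the terminal object. *)
Lemma finitely_complete_products :
  finitely_complete C -> forall E A : C,
    exists (EA : C) (p1 : Hom EA E) (p2 : Hom EA A), is_product p1 p2.
Proof.
  intros [[T HT] Hpb] E A.
  destruct (HT E) as [tE _]. destruct (HT A) as [tA _].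
  destruct (Hpb _ _ _ tE tA) as [P [p [q [_ Hu]]]].
  exists P, p, q. intros Z x y. apply Hu.
  destruct (HT Z) as [t [_ Ut]].
  rewrite <- (Ut (tE ∘ x)), (Ut (tA ∘ y)); auto.
Qed.

Lemma mono_id (B : C) : is_mono (idm B).
Proof. intros X a b E. rewrite !comp_id_l in E; exact E. Qed.

Lemma pullback_id {B B' : C} (g : Hom B' B) :
  is_pullback (idm B) g g (idm B').
Proof.
  split.
  - rewrite comp_id_l, comp_id_r; reflexivity.
  - intros Z x y Exy. rewrite comp_id_l in Exy. exists y. split.
    + rewrite comp_id_l; auto.
    + intros v [_ Hv]. rewrite comp_id_l in Hv; auto.
Qed.

Lemma mono_pullback {I B B' P : C} {m : Hom I B} {g : Hom B' B}
    {g1 : Hom P I} {m' : Hom P B'} :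
  is_mono m -> is_pullback m g g1 m' -> is_mono m'.
Proof.
  intros Hm Hpb X a b Eab. pose proof Hpb as [Hsq _].
  apply (pullback_ext Hpb); [| exact Eab].
  apply Hm. rewrite !comp_assoc, Hsq, <- !comp_assoc, Eab; reflexivity.
Qed.

Lemma product_with_object_pullback {A B E EA EB : C} {f : Hom A B}
    {p1 : Hom EA E} {p2 : Hom EA A} {q1 : Hom EB E} {q2 : Hom EB B}
    {h : Hom EA EB} :
  is_product p1 p2 -> is_product q1 q2 ->
  q1 ∘ h = p1 -> q2 ∘ h = f ∘ p2 ->
  is_pullback f q2 p2 h.
Proof.
  intros HA HB Hh1 Hh2. split; [symmetry; exact Hh2 |].
  intros Z x y Exy.
  destruct (HA _ (q1 ∘ y) x) as [u [[Hu1 Hu2] Uu]].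
  exists u. split.
  - split; [exact Hu2 |].
    apply (product_ext HB).
    + rewrite comp_assoc, Hh1, Hu1; reflexivity.
    + rewrite comp_assoc, Hh2, <- comp_assoc, Hu2, Exy; reflexivity.
  - intros v [Hv1 Hv2]. apply Uu. split; [| exact Hv1].
    rewrite <- Hv2, comp_assoc, Hh1; reflexivity.
Qed.

(* Here [s] is the graph <1, g> of [g] and [k] = <f', g'>. *)
Lemma pullback_along_graph {A B B' P EA EB : C} {f : Hom A B} {g : Hom B' B}
    {g' : Hom P A} {f' : Hom P B'}
    {p1 : Hom EA B'} {p2 : Hom EA A} {q1 : Hom EB B'} {q2 : Hom EB B}
    {h : Hom EA EB} {s : Hom B' EB} {k : Hom P EA} :
  is_pullback f g g' f' -> is_product p1 p2 -> is_product q1 q2 ->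
  q1 ∘ h = p1 -> q2 ∘ h = f ∘ p2 ->
  q1 ∘ s = idm B' -> q2 ∘ s = g ->
  p1 ∘ k = f' -> p2 ∘ k = g' ->
  is_pullback h s k f'.
Proof.
  intros [Hsq Hpb] HA HB Hh1 Hh2 Hs1 Hs2 Hk1 Hk2. split.
  - apply (product_ext HB).
    + rewrite !comp_assoc, Hh1, Hs1, Hk1, comp_id_l; reflexivity.
    + rewrite !comp_assoc, Hh2, Hs2, <- comp_assoc, Hk2; exact Hsq.
  - intros Z x y Exy.
    assert (E1 : p1 ∘ x = y).
    { rewrite <- Hh1, <- comp_assoc, Exy, comp_assoc, Hs1, comp_id_l;
        reflexivity. }
    assert (E2 : f ∘ (p2 ∘ x) = g ∘ y).
    { rewrite comp_assoc, <- Hh2, <- comp_assoc, Exy, comp_assoc, Hs2;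
        reflexivity. }
    destruct (Hpb _ _ _ E2) as [u [[Hu1 Hu2] Uu]].
    exists u. split.
    + split; [| exact Hu2].
      apply (product_ext HA).
      * rewrite comp_assoc, Hk1, Hu2, E1; reflexivity.
      * rewrite comp_assoc, Hk2, Hu1; reflexivity.
    + intros v [Hv1 Hv2]. apply Uu. split; [| exact Hv2].
      rewrite <- Hv1, comp_assoc, Hk2; reflexivity.
Qed.

End Limits.

Lemma regular_epi_pullback_stable_of_factorizations {C : Category} :
  factorizations_pullback_stable C -> regular_epi_pullback_stable C.
Proof.
  intros Hstable A B f Hf B' P g g' f' Hpb.
  exact (proj1 (Hstable A B B f (idm B) Hf (mono_id B) B' B' g (idm B') g
                  (pullback_id g) P f' g' Hpb)).
Qed.

Lemma factorizations_of_regular_epi_pullback_stable {C : Category} :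
  regular_epi_pullback_stable C -> factorizations_pullback_stable C.
Proof.
  intros Hpb A B I e m He Hm B' P g m' g1 Hm' Q e' g2 He'. split.
  - exact (Hpb _ _ e He _ _ _ _ _ He').
  - exact (mono_pullback Hm Hm').
Qed.

Lemma regular_epi_product_with_objects {C : Category} :
  regular_epi_pullback_stable C -> regepi_stable_under_product_with_objects C.
Proof.
  intros Hpb A B f Hf E EA EB p1 p2 q1 q2 HA HB h Hh1 Hh2.
  exact (Hpb _ _ f Hf _ _ q2 p2 h
           (product_with_object_pullback HA HB Hh1 Hh2)).
Qed.

Lemma regular_epi_pullback_stable_of_conditions {C : Category} :
  finitely_complete C ->
  regepi_stable_under_product_with_objects C ->
  regepi_stable_under_split_mono_pullback C ->
  regular_epi_pullback_stable C.
Proof.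
  intros Hfc Hprod Hsplit A B f Hf B' P g g' f' Hpb.
  destruct (finitely_complete_products Hfc B' A) as [EA [p1 [p2 HA]]].
  destruct (finitely_complete_products Hfc B' B) as [EB [q1 [q2 HB]]].
  destruct (product_pairing q1 q2 p1 (f ∘ p2) HB) as [h [Hh1 Hh2]].
  destruct (product_pairing q1 q2 (idm B') g HB) as [s [Hs1 Hs2]].
  destruct (product_pairing p1 p2 f' g' HA) as [k [Hk1 Hk2]].
  assert (Hh : is_regular_epi h)
    by exact (Hprod _ _ f Hf _ _ _ _ _ _ _ HA HB h Hh1 Hh2).
  assert (Hs : is_split_mono s) by (exists q1; exact Hs1).
  exact (Hsplit _ _ h Hh _ s Hs P k f'
           (pullback_along_graph Hpb HA HB Hh1 Hh2 Hs1 Hs2 Hk1 Hk2)).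
Qed.

Theorem lemma2p1 (C : Category) :
  finitely_complete C ->
  (regular C <->
     regepi_mono_factorizations C /\
     regepi_stable_under_product_with_objects C /\
     regepi_stable_under_split_mono_pullback C).
Proof.
  intros Hfc. split.
  - intros [_ [Hfact Hstable]].
    pose proof (regular_epi_pullback_stable_of_factorizations Hstable) as Hpb.
    split; [exact Hfact | split].
    + exact (regular_epi_product_with_objects Hpb).
    + intros A B f Hf B' s _ P. exact (Hpb A B f Hf B' P s).
  - intros [Hfact [Hprod Hsplit]].
    split; [exact Hfc | split; [exact Hfact |]].
    apply factorizations_of_regular_epi_pullback_stable.
    exact (regular_epi_pullback_stable_of_conditions Hfc Hprod Hsplit).
Qed.
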